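(* Let $n\ge2$ and let $\eta$ be a unit vector in the algebraic linear span of $\{\xi_w:w\in\mathbb{F}_n^*\}$ in $F_n^2$. Then there are words $u,v\in\mathbb{F}_n^*$ such that $$L_uR_v\eta=L\xi_\varnothing=R\xi_\varnothing,$$ where $L$ is an isometry in $\mathcal{L}_n$ and $R$ is an isometry in $\mathcal{R}_n$ whose range is orthogonal to the range of $R_1$.
   Context: $F_n^2$ is the full Fock space over $\mathbb{C}^n$ with orthonormal basis $\{\xi_w:w\in\mathbb{F}_n^*\}$, where $\mathbb{F}_n^*$ is the unital free semigroup on letters $1,\dots,n$ with empty word $\varnothing$ ($\xi_\varnothing$ the vacuum vector). $L_i\xi_w=\xi_{iw}$, $R_i\xi_w=\xi_{wi}$; for $w=w_1\cdots w_k$, $L_w=L_{w_1}\cdots L_{w_k}$ and $R_w=R_{w_1}\cdots R_{w_k}$. $\mathcal{L}_n$ and $\mathcal{R}_n$ are the weakly closed unital algebras generated by $L_1,\dots,L_n$ and by $R_1,\dots,R_n$ respectively. *)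

From Stdlib Require Import Reals Lra List Arith.
Import ListNotations.
Open Scope R_scope.

Record C := mkC { re : R; im : R }.
Definition C0 : C := mkC 0 0.
Definition C1 : C := mkC 1 0.
Definition RtoC (r : R) : C := mkC r 0.
Definition Cadd (a b : C) : C := mkC (re a + re b) (im a + im b).
Definition Copp (a : C) : C := mkC (- re a) (- im a).
Definition Csub (a b : C) : C := Cadd a (Copp b).
Definition Cmul (a b : C) : C :=
  mkC (re a * re b - im a * im b) (re a * im b + im a * re b).
Definition Cconj (a : C) : C := mkC (re a) (- im a).
Definition Cnorm2 (a : C) : R := re a * re a + im a * im a.
Definition Cabs (a : C) : R := sqrt (Cnorm2 a).

(* ---------- Words of the free semigroup F_n^* ----------
   Letters 1..n of the paper are encoded as the naturals 0..n-1;
   a word is a list of letters; the empty word is [].            *)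
Definition word := list nat.
Definition valid_word (n : nat) (w : word) : Prop := Forall (fun i => (i < n)%nat) w.

(* ---------- Vectors: functions word -> C (coefficients w.r.t. xi_w) ---------- *)
Definition vec := word -> C.
Definition vzero : vec := fun _ => C0.
Definition vadd (x y : vec) : vec := fun w => Cadd (x w) (y w).
Definition vscale (c : C) (x : vec) : vec := fun w => Cmul c (x w).

Definition xi_empty : vec := fun w => match w with [] => C1 | _ => C0 end.

Definition lsum (f : word -> C) (S : list word) : C :=
  fold_right (fun w acc => Cadd (f w) acc) C0 S.

Definition has_sum (f : word -> C) (s : C) : Prop :=
  forall eps, 0 < eps ->
    exists S0 : list word, forall S : list word,
      NoDup S -> incl S0 S -> Cabs (Csub (lsum f S) s) < eps.

Definition hasnorm2 (x : vec) (r : R) : Prop :=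
  has_sum (fun w => RtoC (Cnorm2 (x w))) (RtoC r).

(* <x, y> = s (linear in the first variable) *)
Definition hasinner (x y : vec) (s : C) : Prop :=
  has_sum (fun w => Cmul (x w) (Cconj (y w))) s.

Definition supported (n : nat) (x : vec) : Prop :=
  forall w, ~ valid_word n w -> x w = C0.

Definition fock (n : nat) (x : vec) : Prop :=
  supported n x /\ exists r, hasnorm2 x r.

Definition in_alg_span (n : nat) (x : vec) : Prop :=
  supported n x /\ exists S : list word, forall w, ~ In w S -> x w = C0.

Definition op := vec -> vec.
Definition op_id : op := fun x => x.
Definition op_comp (A B : op) : op := fun x => A (B x).
Definition op_add (A B : op) : op := fun x => vadd (A x) (B x).
Definition op_scale (c : C) (A : op) : op := fun x => vscale c (A x).

Definition bounded_op (n : nat) (T : op) : Prop :=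
  (forall x, fock n x -> fock n (T x)) /\
  (forall x y, fock n x -> fock n y -> T (vadd x y) = vadd (T x) (T y)) /\
  (forall c x, fock n x -> T (vscale c x) = vscale c (T x)) /\
  (exists M, 0 <= M /\ forall x r r', fock n x -> hasnorm2 x r ->
      hasnorm2 (T x) r' -> r' <= M * r).

Definition isometry (n : nat) (T : op) : Prop :=
  bounded_op n T /\ forall x r, fock n x -> hasnorm2 x r -> hasnorm2 (T x) r.

(* L_i xi_w = xi_{iw} *)
Definition Lop (i : nat) : op := fun x w =>
  match w with
  | j :: w' => if Nat.eqb j i then x w' else C0
  | [] => C0
  end.

(* R_i xi_w = xi_{wi} *)
Definition Rop (i : nat) : op := fun x w =>
  match rev w with
  | j :: rw' => if Nat.eqb j i then x (rev rw') else C0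
  | [] => C0
  end.

Definition Lword (u : word) : op := fold_right (fun i T => op_comp (Lop i) T) op_id u.
Definition Rword (v : word) : op := fold_right (fun i T => op_comp (Rop i) T) op_id v.

(* A basic WOT-neighbourhood of T is given by finitely many pairs (x_k, y_k)
   and eps > 0: { A : |<(A - T) x_k, y_k>| < eps for all k }. *)
Definition wot_closed (n : nat) (S : op -> Prop) : Prop :=
  forall T, bounded_op n T ->
    (forall (ps : list (vec * vec)) (eps : R), 0 < eps ->
       Forall (fun p => fock n (fst p) /\ fock n (snd p)) ps ->
       exists A, S A /\
         Forall (fun p => exists s,
                   hasinner (fun w => Csub (A (fst p) w) (T (fst p) w)) (snd p) s
                   /\ Cabs s < eps) ps) ->
    S T.

Definition unital_algebra (n : nat) (S : op -> Prop) : Prop :=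
  (forall A, S A -> bounded_op n A) /\
  S op_id /\
  (forall A B, S A -> S B -> S (op_add A B)) /\
  (forall c A, S A -> S (op_scale c A)) /\
  (forall A B, S A -> S B -> S (op_comp A B)).

Definition weakly_closed_alg_gen (n : nat) (gen : op -> Prop) (T : op) : Prop :=
  bounded_op n T /\
  forall S, unital_algebra n S -> wot_closed n S ->
    (forall G, gen G -> S G) -> S T.

Definition Lalg (n : nat) : op -> Prop :=
  weakly_closed_alg_gen n (fun G => exists i, (i < n)%nat /\ G = Lop i).
Definition Ralg (n : nat) : op -> Prop :=
  weakly_closed_alg_gen n (fun G => exists i, (i < n)%nat /\ G = Rop i).

Definition ranges_orthogonal (n : nat) (A B : op) : Prop :=
  forall x y, fock n x -> fock n y -> hasinner (A x) (B y) C0.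

(* Write eta = sum_{w in B} c_w xi_w with B finite, every w in B shorter than N, and
   sum |c_w|^2 = 1.  With the marker u = 1 0^N (0-based letters) and its reversal
   u' = 0^N 1, we get L_u R_u eta = sum c_w xi_{u w u'}.  Because |w| < N, the block 0^N 1
   first occurs in w 0^N 1 right after w, so the words u w u' are pairwise incomparable
   for the prefix order.  Hence the L_{u w u'} have pairwise orthogonal ranges and
   L = sum c_w L_{u w u'} is an isometry in L_n with L xi_empty = L_u R_u eta.  Reversing
   words exchanges left and right creation operators, so R = sum c_w R_{u rev(w) u'} is
   an isometry in R_n with R xi_empty = L xi_empty; its range lives on words whose last letter
   is the first letter 1 of u, orthogonal to the range of R_0. *)

From Pilot Require Import Defs.
From Stdlib Require Import Reals Lra Lia List Permutation Classical FunctionalExtensionality.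
Import ListNotations.
Import Defs.
Open Scope R_scope.

Lemma C_ext (a b : C) : re a = re b -> im a = im b -> a = b.
Proof. destruct a, b; simpl; intros -> ->; reflexivity. Qed.

Ltac ceq := apply C_ext; simpl; ring.

Lemma Cnorm2_mul a b : Cnorm2 (Cmul a b) = Cnorm2 a * Cnorm2 b.
Proof. unfold Cnorm2; simpl; ring. Qed.

Lemma Cnorm2_add_disjoint a b : a = C0 \/ b = C0 -> Cnorm2 (Cadd a b) = Cnorm2 a + Cnorm2 b.
Proof. intros [-> | ->]; unfold Cnorm2; simpl; ring. Qed.

Definition word_eq_dec : forall v w : word, {v = w} + {v <> w} := list_eq_dec Nat.eq_dec.

Definition lsumR (f : word -> R) (S : list word) : R :=
  fold_right (fun w acc => f w + acc) 0 S.

Definition has_sumR (f : word -> R) (s : R) : Prop :=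
  forall eps, 0 < eps -> exists S0 : list word, forall S,
    NoDup S -> incl S0 S -> Rabs (lsumR f S - s) < eps.

Lemma lsum_RtoC (f : word -> R) S : lsum (fun w => RtoC (f w)) S = RtoC (lsumR f S).
Proof. induction S as [|w S IH]; simpl; [reflexivity|]. rewrite IH. ceq. Qed.

Lemma Cabs_sub_RtoC a b : Cabs (Csub (RtoC a) (RtoC b)) = Rabs (a - b).
Proof.
  unfold Cabs, Cnorm2, Csub, Cadd, Copp, RtoC; simpl.
  rewrite <- sqrt_Rsqr_abs. f_equal. unfold Rsqr. ring.
Qed.

Lemma hasnorm2_iff x r : hasnorm2 x r <-> has_sumR (fun w => Cnorm2 (x w)) r.
Proof.
  unfold hasnorm2, has_sum, has_sumR.
  split; intros H eps He; destruct (H eps He) as [S0 HS0]; exists S0; intros S HN HI;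
    specialize (HS0 S HN HI); rewrite lsum_RtoC, Cabs_sub_RtoC in *; exact HS0.
Qed.

Lemma has_sumR_unique f a b : has_sumR f a -> has_sumR f b -> a = b.
Proof.
  intros Ha Hb. apply cond_eq. intros eps He.
  destruct (Ha (eps / 2)) as [S1 H1]; [lra|].
  destruct (Hb (eps / 2)) as [S2 H2]; [lra|].
  set (S := nodup word_eq_dec (S1 ++ S2)).
  assert (HS : NoDup S) by apply NoDup_nodup.
  assert (I1 : incl S1 S) by (intros w Hw; apply nodup_In, in_or_app; auto).
  assert (I2 : incl S2 S) by (intros w Hw; apply nodup_In, in_or_app; auto).
  specialize (H1 S HS I1). specialize (H2 S HS I2).
  replace (a - b) with (- (lsumR f S - a) + (lsumR f S - b)) by ring.
  eapply Rle_lt_trans; [apply Rabs_triang|]. rewrite Rabs_Ropp. lra.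
Qed.

Lemma has_sumR_ext f g a : (forall w, f w = g w) -> has_sumR f a -> has_sumR g a.
Proof. intros H. replace g with f by (apply functional_extensionality; exact H). auto. Qed.

Lemma has_sumR_add f g a b : has_sumR f a -> has_sumR g b ->
  has_sumR (fun w => f w + g w) (a + b).
Proof.
  intros Ha Hb eps He.
  destruct (Ha (eps / 2)) as [S1 H1]; [lra|].
  destruct (Hb (eps / 2)) as [S2 H2]; [lra|].
  exists (S1 ++ S2). intros S HN HI.
  assert (I1 : incl S1 S) by (intros w Hw; apply HI, in_or_app; auto).
  assert (I2 : incl S2 S) by (intros w Hw; apply HI, in_or_app; auto).
  specialize (H1 S HN I1). specialize (H2 S HN I2).
  assert (E : lsumR (fun w => f w + g w) S = lsumR f S + lsumR g S).
  { clear. induction S; simpl; lra. }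
  rewrite E. apply Rabs_def2 in H1. apply Rabs_def2 in H2. apply Rabs_def1; lra.
Qed.

Lemma has_sumR_scale k f a : has_sumR f a -> has_sumR (fun w => k * f w) (k * a).
Proof.
  intros Ha eps He.
  destruct (Ha (eps / (Rabs k + 1))) as [S0 H0].
  { apply Rdiv_lt_0_compat; [lra|]. pose proof (Rabs_pos k); lra. }
  exists S0. intros S HN HI. specialize (H0 S HN HI).
  assert (E : lsumR (fun w => k * f w) S = k * lsumR f S).
  { clear. induction S; simpl; [ring|]. rewrite IHS; ring. }
  rewrite E, <- Rmult_minus_distr_l, Rabs_mult.
  set (t := eps / (Rabs k + 1)) in *.
  assert (Ht : eps = t * (Rabs k + 1)) by (unfold t; field; pose proof (Rabs_pos k); lra).
  pose proof (Rabs_pos (lsumR f S - a)). pose proof (Rabs_pos k). rewrite Ht. nra.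
Qed.

Lemma has_sumR_finite f S : NoDup S -> (forall w, ~ In w S -> f w = 0) ->
  has_sumR f (lsumR f S).
Proof.
  intros HN Hf eps He. exists S. intros T HT HI.
  set (inS := fun w => if in_dec word_eq_dec w S then true else false).
  assert (Hfilter : lsumR f T = lsumR f (filter inS T)).
  { clear -Hf. induction T as [|w T IH]; simpl; [reflexivity|]. unfold inS at 1.
    destruct (in_dec word_eq_dec w S); simpl; rewrite IH; [reflexivity|]. rewrite Hf; auto; ring. }
  assert (Hperm : Permutation (filter inS T) S).
  { apply NoDup_Permutation; [apply NoDup_filter; auto | auto |].
    intros w. rewrite filter_In. unfold inS.
    destruct (in_dec word_eq_dec w S) as [Hw|Hw]; split; intros H; try tauto.
    - split; [apply HI, H | reflexivity].
    - destruct H; discriminate. }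
  rewrite Hfilter. replace (lsumR f (filter inS T)) with (lsumR f S).
  - rewrite Rminus_diag, Rabs_R0. exact He.
  - symmetry. clear -Hperm. induction Hperm; simpl; lra.
Qed.

Definition preimage (psi : word -> option word) (S : list word) : list word :=
  flat_map (fun v => match psi v with Some w => [w] | None => [] end) S.

Lemma in_preimage psi S w : In w (preimage psi S) <-> exists v, In v S /\ psi v = Some w.
Proof.
  unfold preimage. rewrite in_flat_map. split; intros [v [Hv Hw]]; exists v; split; auto.
  - destruct (psi v); simpl in Hw; [|tauto]. destruct Hw as [->|[]]; reflexivity.
  - rewrite Hw. now left.
Qed.

Section Reindex.

Variables (phi : word -> word) (psi : word -> option word).
Hypothesis psi_phi : forall w, psi (phi w) = Some w.
Hypothesis phi_psi : forall v w, psi v = Some w -> v = phi w.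

Lemma NoDup_preimage S : NoDup S -> NoDup (preimage psi S).
Proof.
  induction 1 as [|v S Hv HN IH]; [constructor|]. unfold preimage; simpl.
  destruct (psi v) as [w|] eqn:E; [|exact IH]. simpl. constructor; [|exact IH].
  intros Hw. apply in_preimage in Hw as [v' [Hv' E']].
  apply Hv. rewrite (phi_psi _ _ E), <- (phi_psi _ _ E'). exact Hv'.
Qed.

Lemma has_sumR_reindex f g s :
  (forall v, psi v = None -> g v = 0) -> (forall w, g (phi w) = f w) ->
  has_sumR f s -> has_sumR g s.
Proof.
  intros Hg0 Hgf Hf eps He. destruct (Hf eps He) as [S0 H0].
  exists (map phi S0). intros S HN HI.
  replace (lsumR g S) with (lsumR f (preimage psi S)).
  - apply H0; [apply NoDup_preimage, HN|].
    intros w Hw. apply in_preimage. exists (phi w). split; auto. apply HI, in_map, Hw.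
  - clear -Hg0 Hgf phi_psi. induction S as [|v S IH]; [reflexivity|]. unfold preimage; simpl.
    destruct (psi v) as [w|] eqn:E; simpl; fold (preimage psi S); rewrite IH.
    + rewrite (phi_psi _ _ E), Hgf. reflexivity.
    + rewrite Hg0; auto. ring.
Qed.

End Reindex.

Definition opword (G : nat -> op) (p : word) : op :=
  fold_right (fun i A => op_comp (G i) A) op_id p.

Definition opoly (G : nat -> op) (T : list (C * word)) : op :=
  fold_right (fun cp A => op_add (op_scale (fst cp) (opword G (snd cp))) A)
    (op_scale C0 op_id) T.

Definition Lpoly : list (C * word) -> op := opoly Lop.
Definition Rpoly : list (C * word) -> op := opoly Rop.

Lemma unital_algebra_opoly n (S : op -> Prop) G T :
  unital_algebra n S -> (forall i, (i < n)%nat -> S (G i)) ->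
  Forall (valid_word n) (map snd T) -> S (opoly G T).
Proof.
  intros (_ & Hid & Hadd & Hscale & Hcomp) HG HT.
  assert (Hword : forall p, valid_word n p -> S (opword G p)).
  { induction p as [|i p IH]; intros Hp; [exact Hid|].
    inversion Hp; subst. apply Hcomp; auto. }
  induction T as [|[c p] T IH]; [apply Hscale, Hid|].
  inversion HT; subst. apply Hadd; auto.
Qed.

Lemma opoly_in_generated_alg n G T :
  bounded_op n (opoly G T) -> Forall (valid_word n) (map snd T) ->
  weakly_closed_alg_gen n (fun A => exists i, (i < n)%nat /\ A = G i) (opoly G T).
Proof.
  intros Hb HT. split; [exact Hb|]. intros S HS _ Hgen.
  apply (unital_algebra_opoly n); auto. intros i Hi. apply Hgen. eauto.
Qed.

Lemma Lword_cons i p x : Lword (i :: p) x = Lop i (Lword p x).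
Proof. reflexivity. Qed.

Lemma Lword_app p q x : Lword (p ++ q) x = Lword p (Lword q x).
Proof. induction p as [|i p IH]; [reflexivity|]. simpl app. rewrite !Lword_cons, IH. reflexivity. Qed.

Lemma Lpoly_nil x : Lpoly [] x = vscale C0 x.
Proof. reflexivity. Qed.

Lemma Lpoly_cons c p T x : Lpoly ((c, p) :: T) x = vadd (vscale c (Lword p x)) (Lpoly T x).
Proof. reflexivity. Qed.

Lemma vscale_C0 x : vscale C0 x = vzero.
Proof. apply functional_extensionality; intro w; unfold vscale, vzero; ceq. Qed.

Lemma Lop_add i x y : Lop i (vadd x y) = vadd (Lop i x) (Lop i y).
Proof.
  apply functional_extensionality; intros [|j w]; unfold Lop, vadd; [ceq|].
  destruct (Nat.eqb j i); [reflexivity|ceq].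
Qed.

Lemma Lop_scale i c x : Lop i (vscale c x) = vscale c (Lop i x).
Proof.
  apply functional_extensionality; intros [|j w]; unfold Lop, vscale; [ceq|].
  destruct (Nat.eqb j i); [reflexivity|ceq].
Qed.

Lemma Lword_add p x y : Lword p (vadd x y) = vadd (Lword p x) (Lword p y).
Proof. induction p as [|i p IH]; [reflexivity|]. rewrite !Lword_cons, IH, Lop_add. reflexivity. Qed.

Lemma Lword_scale p c x : Lword p (vscale c x) = vscale c (Lword p x).
Proof. induction p as [|i p IH]; [reflexivity|]. rewrite !Lword_cons, IH, Lop_scale. reflexivity. Qed.

Lemma Lpoly_add T x y : Lpoly T (vadd x y) = vadd (Lpoly T x) (Lpoly T y).
Proof.
  induction T as [|[c p] T IH].
  - rewrite !Lpoly_nil, !vscale_C0. apply functional_extensionality; intro; unfold vadd, vzero; ceq.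
  - rewrite !Lpoly_cons, IH, Lword_add. apply functional_extensionality; intro; unfold vadd, vscale; ceq.
Qed.

Lemma Lpoly_scale T c x : Lpoly T (vscale c x) = vscale c (Lpoly T x).
Proof.
  induction T as [|[d p] T IH].
  - rewrite !Lpoly_nil, !vscale_C0. apply functional_extensionality; intro; unfold vscale, vzero; ceq.
  - rewrite !Lpoly_cons, IH, Lword_scale. apply functional_extensionality; intro; unfold vadd, vscale; ceq.
Qed.

Lemma Lop_supported n i x : (i < n)%nat -> supported n x -> supported n (Lop i x).
Proof.
  intros Hi Hx [|j w] Hw; [reflexivity|]. unfold Lop.
  destruct (Nat.eqb_spec j i) as [->|]; [|reflexivity].
  apply Hx. intros Hv. apply Hw. constructor; assumption.
Qed.

Lemma Lword_supported n p x : valid_word n p -> supported n x -> supported n (Lword p x).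
Proof. intros Hp Hx. induction Hp; [exact Hx|]. apply Lop_supported; assumption. Qed.

Lemma Lpoly_supported n T x : Forall (valid_word n) (map snd T) ->
  supported n x -> supported n (Lpoly T x).
Proof.
  intros HT Hx. induction T as [|[c p] T IH].
  - rewrite Lpoly_nil, vscale_C0. intros w _; reflexivity.
  - inversion HT; subst. rewrite Lpoly_cons. intros w Hw. unfold vadd, vscale.
    rewrite (Lword_supported n p x), IH; auto. ceq.
Qed.

Definition strip (i : nat) (v : word) : option word :=
  match v with j :: w => if Nat.eqb j i then Some w else None | [] => None end.

Lemma hasnorm2_Lop i x r : hasnorm2 x r -> hasnorm2 (Lop i x) r.
Proof.
  rewrite !hasnorm2_iff. apply (has_sumR_reindex (cons i) (strip i)).
  - intros w. simpl. rewrite Nat.eqb_refl. reflexivity.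
  - intros [|j v] w; simpl; [discriminate|].
    destruct (Nat.eqb_spec j i) as [->|]; [|discriminate]. now intros [= ->].
  - intros [|j v] Hv; simpl in *; [unfold Cnorm2; simpl; ring|].
    destruct (Nat.eqb j i); [discriminate|]. unfold Cnorm2; simpl; ring.
  - intros w. simpl. rewrite Nat.eqb_refl. reflexivity.
Qed.

Lemma hasnorm2_Lword p x r : hasnorm2 x r -> hasnorm2 (Lword p x) r.
Proof. induction p as [|i p IH]; intros H; [exact H|]. apply hasnorm2_Lop, IH, H. Qed.

(** * Prefix-free polynomials are isometries *)

Definition prefix (p w : word) : Prop := exists s, w = p ++ s.

Definition prefix_free (P : list word) : Prop :=
  ForallOrdPairs (fun p q => ~ prefix p q /\ ~ prefix q p) P.

Lemma prefix_comparable p q w : prefix p w -> prefix q w -> prefix p q \/ prefix q p.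
Proof.
  intros [s ->] [t Ht].
  destruct (app_eq_app _ _ _ _ Ht) as [l [[-> _]|[-> _]]]; [right|left]; exists l; reflexivity.
Qed.

Lemma Lword_notprefix p x w : ~ prefix p w -> Lword p x w = C0.
Proof.
  revert w. induction p as [|i p IH]; intros w Hw.
  - exfalso. apply Hw. exists w. reflexivity.
  - rewrite Lword_cons. destruct w as [|j w]; [reflexivity|]. unfold Lop.
    destruct (Nat.eqb_spec j i) as [->|]; [|reflexivity].
    apply IH. intros [s ->]. apply Hw. exists s. reflexivity.
Qed.

Lemma Lpoly_notprefix T x w : (forall p, In p (map snd T) -> ~ prefix p w) -> Lpoly T x w = C0.
Proof.
  induction T as [|[c p] T IH]; intros H.
  - rewrite Lpoly_nil, vscale_C0. reflexivity.
  - rewrite Lpoly_cons. unfold vadd, vscale.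
    rewrite Lword_notprefix, IH; [ceq| |].
    + intros q Hq. apply H. right. exact Hq.
    + apply H. left. reflexivity.
Qed.

Definition coef_norm2 (T : list (C * word)) : R :=
  fold_right (fun cp acc => Cnorm2 (fst cp) + acc) 0 T.

Lemma hasnorm2_Lpoly T x r : prefix_free (map snd T) -> hasnorm2 x r ->
  hasnorm2 (Lpoly T x) (coef_norm2 T * r).
Proof.
  intros HT Hx. induction T as [|[c p] T IH]; apply hasnorm2_iff.
  - replace (coef_norm2 [] * r) with (Cnorm2 C0 * r) by (unfold Cnorm2; simpl; ring).
    eapply has_sumR_ext; [|apply has_sumR_scale, hasnorm2_iff, Hx].
    intros w. rewrite Lpoly_nil. unfold vscale. rewrite Cnorm2_mul. reflexivity.
  - inversion HT as [|? ? Hhead Htail]; subst.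
    assert (Hhd : has_sumR (fun w => Cnorm2 c * Cnorm2 (Lword p x w)) (Cnorm2 c * r))
      by apply has_sumR_scale, hasnorm2_iff, hasnorm2_Lword, Hx.
    pose proof (has_sumR_add _ _ _ _ Hhd (proj1 (hasnorm2_iff _ _) (IH Htail))) as Hsum.
    simpl coef_norm2. rewrite Rmult_plus_distr_r.
    eapply has_sumR_ext; [|exact Hsum]. intros w. cbv beta.
    rewrite Lpoly_cons. unfold vadd, vscale. rewrite Cnorm2_add_disjoint, Cnorm2_mul; [reflexivity|].
    (* at most one word of a prefix-free family is a prefix of [w] *)
    destruct (classic (prefix p w)) as [Hp|Hp].
    + right. apply Lpoly_notprefix. intros q Hq Hqw.
      rewrite Forall_forall in Hhead. destruct (Hhead q Hq).
      destruct (prefix_comparable p q w); tauto.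
    + left. rewrite Lword_notprefix by exact Hp. ceq.
Qed.

Lemma isometry_intro n (A : op) :
  (forall x y, A (vadd x y) = vadd (A x) (A y)) ->
  (forall c x, A (vscale c x) = vscale c (A x)) ->
  (forall x, supported n x -> supported n (A x)) ->
  (forall x r, hasnorm2 x r -> hasnorm2 (A x) r) -> isometry n A.
Proof.
  intros Hadd Hscale Hsupp Hnorm. split; [|intros x r _; apply Hnorm].
  split; [|split; [|split]]; auto.
  - intros x [Hx [r Hr]]. split; [apply Hsupp, Hx|]. exists r. apply Hnorm, Hr.
  - exists 1. split; [lra|]. intros x r r' _ Hr Hr'.
    rewrite hasnorm2_iff in Hr'. pose proof (proj1 (hasnorm2_iff _ _) (Hnorm _ _ Hr)) as H.
    rewrite (has_sumR_unique _ _ _ Hr' H). lra.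
Qed.

Lemma Lpoly_isometry n T :
  prefix_free (map snd T) -> Forall (valid_word n) (map snd T) -> coef_norm2 T = 1 ->
  isometry n (Lpoly T).
Proof.
  intros HP HV Hc. apply isometry_intro.
  - apply Lpoly_add.
  - apply Lpoly_scale.
  - intros x Hx. apply Lpoly_supported; assumption.
  - intros x r Hx. rewrite <- (Rmult_1_l r), <- Hc. apply hasnorm2_Lpoly; assumption.
Qed.

(** * Word reversal exchanges left and right creation operators *)

Definition revv (x : vec) : vec := fun w => x (rev w).

Lemma revv_involutive x : revv (revv x) = x.
Proof. apply functional_extensionality; intro w; unfold revv; rewrite rev_involutive; reflexivity. Qed.

Lemma valid_word_rev n w : valid_word n w -> valid_word n (rev w).
Proof. unfold valid_word. rewrite !Forall_forall. intros H i Hi. apply H, in_rev, Hi. Qed.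

Lemma supported_revv n x : supported n x -> supported n (revv x).
Proof.
  intros H w Hw. apply H. intros Hv. apply Hw.
  rewrite <- (rev_involutive w). apply valid_word_rev, Hv.
Qed.

Lemma hasnorm2_revv x r : hasnorm2 x r -> hasnorm2 (revv x) r.
Proof.
  rewrite !hasnorm2_iff. apply (has_sumR_reindex (@rev nat) (fun v => Some (rev v))).
  - intros w. rewrite rev_involutive. reflexivity.
  - intros v w [= <-]. rewrite rev_involutive. reflexivity.
  - discriminate.
  - intros w. unfold revv. rewrite rev_involutive. reflexivity.
Qed.

Lemma fock_revv n x : fock n x -> fock n (revv x).
Proof. intros [Hs [r Hr]]. split; [apply supported_revv, Hs|]. exists r. apply hasnorm2_revv, Hr. Qed.

Lemma isometry_revv_conj n A : isometry n A -> isometry n (fun x => revv (A (revv x))).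
Proof.
  intros [[Hfock (Hadd & Hscale & M & HM & Hbound)] Hnorm].
  split; [split; [|split; [|split]]|].
  - intros x Hx. apply fock_revv, Hfock, fock_revv, Hx.
  - intros x y Hx Hy. change (revv (vadd x y)) with (vadd (revv x) (revv y)).
    rewrite Hadd by (apply fock_revv; assumption). reflexivity.
  - intros c x Hx. change (revv (vscale c x)) with (vscale c (revv x)).
    rewrite Hscale by (apply fock_revv; assumption). reflexivity.
  - exists M. split; [exact HM|]. intros x r r' Hx Hr Hr'.
    apply (Hbound (revv x)); [apply fock_revv, Hx | apply hasnorm2_revv, Hr |].
    rewrite <- (revv_involutive (A (revv x))). apply hasnorm2_revv, Hr'.
  - intros x r Hx Hr. apply hasnorm2_revv, Hnorm; [apply fock_revv, Hx | apply hasnorm2_revv, Hr].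
Qed.

Lemma Rword_revv q x : Rword q x = revv (Lword q (revv x)).
Proof.
  induction q as [|i q IH]; [symmetry; apply revv_involutive|].
  change (Rop i (Rword q x) = revv (Lop i (Lword q (revv x)))).
  rewrite IH. change (Rop i) with (fun y => revv (Lop i (revv y))). cbv beta.
  rewrite revv_involutive. reflexivity.
Qed.

Lemma Rpoly_revv T x : Rpoly T x = revv (Lpoly T (revv x)).
Proof.
  induction T as [|[c p] T IH].
  - change (vscale C0 x = revv (vscale C0 (revv x))). rewrite !vscale_C0. reflexivity.
  - change (vadd (vscale c (Rword p x)) (Rpoly T x)
            = revv (vadd (vscale c (Lword p (revv x))) (Lpoly T (revv x)))).
    rewrite IH, Rword_revv. reflexivity.
Qed.

Lemma Rpoly_isometry n T :
  prefix_free (map snd T) -> Forall (valid_word n) (map snd T) -> coef_norm2 T = 1 ->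
  isometry n (Rpoly T).
Proof.
  intros HP HV Hc.
  replace (Rpoly T) with (fun x => revv (Lpoly T (revv x)))
    by (apply functional_extensionality; intro x; symmetry; apply Rpoly_revv).
  apply isometry_revv_conj, Lpoly_isometry; assumption.
Qed.

Definition delta (p : word) : vec := fun w => if word_eq_dec w p then C1 else C0.

Lemma Lword_xi p : Lword p xi_empty = delta p.
Proof.
  apply functional_extensionality. induction p as [|i p IH]; intros [|j w]; unfold delta.
  - reflexivity.
  - destruct (word_eq_dec (j :: w) []); [discriminate|reflexivity].
  - destruct (word_eq_dec [] (i :: p)); [discriminate|reflexivity].
  - rewrite Lword_cons. unfold Lop. rewrite IH. unfold delta.
    destruct (word_eq_dec w p), (word_eq_dec (j :: w) (i :: p)), (Nat.eqb_spec j i);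
      congruence.
Qed.

Lemma revv_Lword_xi p : revv (Lword p xi_empty) = Lword (rev p) xi_empty.
Proof.
  rewrite !Lword_xi. apply functional_extensionality; intro w. unfold revv, delta.
  destruct (word_eq_dec (rev w) p) as [E|E], (word_eq_dec w (rev p)) as [E'|E'];
    try reflexivity; exfalso.
  - apply E'. rewrite <- E, rev_involutive. reflexivity.
  - apply E. rewrite E', rev_involutive. reflexivity.
Qed.

Definition mapw (f : word -> word) (T : list (C * word)) : list (C * word) :=
  map (fun cp => (fst cp, f (snd cp))) T.

Lemma Lword_Lpoly q T z : Lword q (Lpoly T z) = Lpoly (mapw (app q) T) z.
Proof.
  induction T as [|[c p] T IH].
  - simpl mapw. rewrite !Lpoly_nil, Lword_scale, !vscale_C0. reflexivity.
  - simpl mapw. rewrite !Lpoly_cons, Lword_add, Lword_scale, IH, Lword_app. reflexivity.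
Qed.

Lemma revv_Lpoly_xi T : revv (Lpoly T xi_empty) = Lpoly (mapw (@rev nat) T) xi_empty.
Proof.
  induction T as [|[c p] T IH].
  - simpl mapw. rewrite !Lpoly_nil, vscale_C0. reflexivity.
  - simpl mapw. rewrite !Lpoly_cons, <- IH, <- revv_Lword_xi. reflexivity.
Qed.

Lemma Rword_Lpoly_xi q T :
  Rword q (Lpoly T xi_empty) = Lpoly (mapw (fun p => p ++ rev q) T) xi_empty.
Proof.
  rewrite Rword_revv, revv_Lpoly_xi, Lword_Lpoly, revv_Lpoly_xi.
  unfold mapw. rewrite !map_map. f_equal. apply map_ext. intros [c p]. simpl.
  rewrite rev_app_distr, rev_involutive. reflexivity.
Qed.

Lemma Rpoly_xi T : Rpoly T xi_empty = Lpoly (mapw (@rev nat) T) xi_empty.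
Proof.
  rewrite Rpoly_revv, (revv_Lword_xi [] : revv xi_empty = xi_empty), revv_Lpoly_xi.
  reflexivity.
Qed.

Lemma Lpoly_basis_expansion (x : vec) B : NoDup B -> (forall w, ~ In w B -> x w = C0) ->
  x = Lpoly (map (fun w => (x w, w)) B) xi_empty.
Proof.
  intros HND HZ. apply functional_extensionality; intro w.
  enough (E : Lpoly (map (fun w => (x w, w)) B) xi_empty w
              = if in_dec word_eq_dec w B then x w else C0).
  { rewrite E. destruct (in_dec word_eq_dec w B); [reflexivity|]. apply HZ; assumption. }
  clear HZ. induction HND as [|p B Hp HND IH].
  - rewrite Lpoly_nil, vscale_C0. reflexivity.
  - simpl map. rewrite Lpoly_cons. unfold vadd, vscale. rewrite IH, Lword_xi. unfold delta.
    destruct (word_eq_dec w p) as [->|Hw].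
    + destruct (in_dec word_eq_dec p B); [contradiction|].
      destruct (in_dec word_eq_dec p (p :: B)) as [|H]; [ceq|]. exfalso. apply H. left. reflexivity.
    + destruct (in_dec word_eq_dec w B), (in_dec word_eq_dec w (p :: B)) as [H|H]; try ceq.
      * exfalso. apply H. right. assumption.
      * destruct H; [congruence|contradiction].
Qed.

Lemma coef_norm2_expansion (x : vec) B (f : word -> word) r :
  NoDup B -> (forall w, ~ In w B -> x w = C0) -> hasnorm2 x r ->
  coef_norm2 (map (fun w => (x w, f w)) B) = r.
Proof.
  intros HND HZ Hx. apply hasnorm2_iff in Hx.
  replace (coef_norm2 (map (fun w => (x w, f w)) B)) with (lsumR (fun w => Cnorm2 (x w)) B)
    by (clear; induction B; simpl; congruence).
  apply (has_sumR_unique (fun w => Cnorm2 (x w))); [|exact Hx].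
  apply has_sumR_finite; [exact HND|]. intros w Hw. rewrite HZ by exact Hw. unfold Cnorm2; simpl; ring.
Qed.

Lemma has_sum_zero : has_sum (fun _ => C0) C0.
Proof.
  intros eps He. exists []. intros S _ _.
  replace (lsum (fun _ => C0) S) with C0 by (induction S; simpl; [|rewrite <- IHS]; ceq).
  unfold Cabs, Cnorm2; simpl. replace ((0 + - 0) * (0 + - 0) + (0 + - 0) * (0 + - 0)) with 0 by ring.
  rewrite sqrt_0. exact He.
Qed.

(* [Rword p] creates [rev p] at the right end, so its range ends with the first letter of [p]. *)
Lemma Rpoly_orthogonal_Rop n T j :
  Forall (fun p => exists i q, i <> j /\ p = i :: q) (map snd T) ->
  ranges_orthogonal n (Rpoly T) (Rop j).
Proof.
  intros HT x y _ _. unfold hasinner.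
  replace (fun w => Cmul (Rpoly T x w) (Cconj (Rop j y w))) with (fun _ : word => C0);
    [apply has_sum_zero|].
  apply functional_extensionality; intro w. rewrite Rpoly_revv. unfold revv, Rop.
  destruct (rev w) as [|k t]; [ceq|].
  destruct (Nat.eqb_spec k j) as [->|]; [|ceq].
  rewrite Lpoly_notprefix; [ceq|]. intros p Hp [s Hs].
  rewrite Forall_forall in HT. destruct (HT p Hp) as (i & q & Hij & ->).
  injection Hs. congruence.
Qed.

(** * Marked words *)

Definition marker (N : nat) : word := 1%nat :: repeat 0%nat N.

Definition marked (N : nat) (w : word) : word := marker N ++ w ++ rev (marker N).

Lemma rev_marker N : rev (marker N) = repeat 0%nat N ++ [1%nat].
Proof. simpl. rewrite rev_repeat. reflexivity. Qed.

Lemma rev_marked N w : rev (marked N w) = marked N (rev w).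
Proof. unfold marked. rewrite !rev_app_distr, rev_involutive, app_assoc. reflexivity. Qed.

Lemma valid_word_marker n N : (2 <= n)%nat -> valid_word n (marker N).
Proof.
  intros Hn. constructor; [lia|].
  apply Forall_forall. intros i Hi. apply repeat_spec in Hi. lia.
Qed.

Lemma valid_word_marked n N w : (2 <= n)%nat -> valid_word n w -> valid_word n (marked N w).
Proof.
  intros Hn Hw. pose proof (valid_word_marker n N Hn) as Hm.
  apply Forall_app; split; [exact Hm|]. apply Forall_app; split; [exact Hw|]. apply valid_word_rev, Hm.
Qed.

(* The first [b] of [w ++ a^N ++ [b]] sits at position [length w], since [length w < N]. *)
Lemma suffix_marked_prefix_inj (a b N : nat) (w w' s : word) :
  a <> b -> (length w < N)%nat -> (length w' < N)%nat ->
  w' ++ repeat a N ++ [b] = (w ++ repeat a N ++ [b]) ++ s -> w = w'.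
Proof.
  intros Hab Hw Hw' H.
  assert (Hlen : length w' = (length w + length s)%nat).
  { apply (f_equal (@length nat)) in H. rewrite !length_app, repeat_length in H. simpl in H. lia. }
  destruct s as [|c s].
  - rewrite app_nil_r in H. symmetry. apply app_inv_tail in H. exact H.
  - exfalso. apply Hab.
    apply (f_equal (fun l => nth (length w + N) l a)) in H. rewrite <- app_assoc in H.
    simpl in Hlen.
    rewrite (app_nth2 w'), (app_nth1 (repeat a N)), nth_repeat in H
      by (rewrite ?repeat_length; lia).
    rewrite H, (app_nth2 w) by lia.
    replace (length w + N - length w)%nat with N by lia.
    rewrite (app_nth1 (repeat a N ++ [b])) by (rewrite length_app, repeat_length; simpl; lia).
    rewrite (app_nth2 (repeat a N)), repeat_length, Nat.sub_diag by (rewrite repeat_length; lia).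
    reflexivity.
Qed.

Lemma marked_prefix_inj N w w' : (length w < N)%nat -> (length w' < N)%nat ->
  prefix (marked N w) (marked N w') -> w = w'.
Proof.
  intros Hw Hw' [s Hs]. unfold marked in Hs. rewrite <- !app_assoc in Hs.
  apply app_inv_head in Hs. rewrite rev_marker in Hs.
  apply (suffix_marked_prefix_inj 0 1 N w w' s); auto. rewrite Hs, app_assoc. reflexivity.
Qed.

Lemma marked_prefix_free N B : NoDup B -> Forall (fun w => (length w < N)%nat) B ->
  prefix_free (map (marked N) B).
Proof.
  induction 1 as [|w B Hw HND IH]; intros Hlen; simpl; constructor.
  - inversion Hlen as [|? ? Hlw HlB]; subst. rewrite Forall_forall in HlB |- *.
    intros m Hm. apply in_map_iff in Hm as [w' [<- Hw']].
    split; intros Hp; apply Hw; [rewrite (marked_prefix_inj N w w') | rewrite <- (marked_prefix_inj N w' w)];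
      auto.
  - apply IH. inversion Hlen; assumption.
Qed.

Lemma in_alg_span_finite_basis n x : in_alg_span n x ->
  exists B, NoDup B /\ Forall (valid_word n) B /\ forall w, ~ In w B -> x w = C0.
Proof.
  intros [Hsupp [S HS]].
  set (validb := fun w : word => forallb (fun i => Nat.ltb i n) w).
  assert (Hvalidb : forall w, validb w = true <-> valid_word n w).
  { intros w. unfold validb, valid_word. rewrite forallb_forall, Forall_forall.
    split; intros H i Hi; apply Nat.ltb_lt, H, Hi. }
  exists (filter validb (nodup word_eq_dec S)). split; [|split].
  - apply NoDup_filter, NoDup_nodup.
  - apply Forall_forall. intros w Hw. apply filter_In in Hw. apply Hvalidb, Hw.
  - intros w Hw. destruct (in_dec word_eq_dec w S) as [HwS|HwS]; [|apply HS, HwS].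
    apply Hsupp. intros Hv. apply Hw, filter_In. split; [apply nodup_In, HwS | apply Hvalidb, Hv].
Qed.

Lemma Forall_length_lt (B : list word) : exists N, Forall (fun w => (length w < N)%nat) B.
Proof.
  induction B as [|w B [N HN]]; [exists 0%nat; constructor|].
  exists (Nat.max N (Datatypes.S (length w))). constructor; [lia|].
  eapply Forall_impl; [|exact HN]. intros v Hv. cbv beta in *. lia.
Qed.

Section MarkedExpansion.

Variables (n N : nat) (eta : vec) (B : list word).
Hypothesis Hn : (2 <= n)%nat.
Hypothesis HB : NoDup B.
Hypothesis HB_valid : Forall (valid_word n) B.
Hypothesis HB_length : Forall (fun w => (length w < N)%nat) B.
Hypothesis Heta_supp : forall w, ~ In w B -> eta w = C0.
Hypothesis Heta_norm : hasnorm2 eta 1.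

Definition Lmarked : op := Lpoly (map (fun w => (eta w, marked N w)) B).
Definition Rmarked : op := Rpoly (map (fun w => (eta w, marked N (rev w))) B).

Lemma marked_words_valid (f : word -> word) :
  (forall w, valid_word n w -> valid_word n (f w)) ->
  Forall (valid_word n) (map snd (map (fun w => (eta w, marked N (f w))) B)).
Proof.
  intros Hf. rewrite map_map, Forall_map.
  eapply Forall_impl; [|exact HB_valid]. intros w Hw. apply valid_word_marked, Hf, Hw. exact Hn.
Qed.

Lemma Lmarked_isometry : isometry n Lmarked.
Proof.
  apply Lpoly_isometry.
  - rewrite map_map. apply marked_prefix_free; assumption.
  - apply (marked_words_valid (fun w => w)). auto.
  - apply coef_norm2_expansion; assumption.
Qed.

Lemma Rmarked_isometry : isometry n Rmarked.
Proof.
  apply Rpoly_isometry.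
  - replace (map snd _) with (map (marked N) (map (@rev nat) B)) by (rewrite !map_map; reflexivity).
    apply marked_prefix_free.
    + apply NoDup_map_NoDup_ForallPairs; [|exact HB]. intros v w _ _. apply rev_inj.
    + rewrite Forall_map. eapply Forall_impl; [|exact HB_length]. intros w Hw. rewrite length_rev. exact Hw.
  - apply marked_words_valid, valid_word_rev.
  - apply coef_norm2_expansion; assumption.
Qed.

Lemma Lmarked_in_Lalg : Lalg n Lmarked.
Proof.
  apply opoly_in_generated_alg; [apply Lmarked_isometry|].
  apply (marked_words_valid (fun w => w)). auto.
Qed.

Lemma Rmarked_in_Ralg : Ralg n Rmarked.
Proof.
  apply opoly_in_generated_alg; [apply Rmarked_isometry|].
  apply marked_words_valid, valid_word_rev.
Qed.

Lemma Rmarked_orthogonal_R0 : ranges_orthogonal n Rmarked (Rop 0).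
Proof.
  apply Rpoly_orthogonal_Rop. rewrite map_map, Forall_forall. intros p Hp.
  apply in_map_iff in Hp as [w [<- _]]. simpl. eexists 1%nat, _. split; [discriminate|reflexivity].
Qed.

Lemma Lword_Rword_marker_eta : Lword (marker N) (Rword (marker N) eta) = Lmarked xi_empty.
Proof.
  set (E := map (fun w => (eta w, w)) B).
  assert (Heta : eta = Lpoly E xi_empty) by (apply Lpoly_basis_expansion; assumption).
  rewrite Heta at 1. rewrite Rword_Lpoly_xi, Lword_Lpoly.
  unfold Lmarked, E, mapw. rewrite !map_map. reflexivity.
Qed.

Lemma Lmarked_xi_Rmarked_xi : Lmarked xi_empty = Rmarked xi_empty.
Proof.
  unfold Rmarked. rewrite Rpoly_xi. unfold Lmarked, mapw. rewrite map_map. f_equal.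
  apply map_ext. intros w. cbn [fst snd]. rewrite rev_marked, rev_involutive. reflexivity.
Qed.

End MarkedExpansion.

Theorem lemma4p3 (n : nat) (eta : vec) :
  (2 <= n)%nat ->
  in_alg_span n eta ->
  hasnorm2 eta 1 ->
  exists (u v : word) (L Rr : op),
    valid_word n u /\ valid_word n v /\
    Lalg n L /\ isometry n L /\
    Ralg n Rr /\ isometry n Rr /\
    ranges_orthogonal n Rr (Rop 0) /\
    (forall w, Lword u (Rword v eta) w = L xi_empty w) /\
    (forall w, L xi_empty w = Rr xi_empty w).
Proof.
  intros Hn Hspan Hnorm.
  destruct (in_alg_span_finite_basis n eta Hspan) as (B & HB & HB_valid & Hsupp).
  destruct (Forall_length_lt B) as [N HN].
  exists (marker N), (marker N), (Lmarked N eta B), (Rmarked N eta B).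
  split; [apply valid_word_marker, Hn|].
  split; [apply valid_word_marker, Hn|].
  split; [apply Lmarked_in_Lalg; assumption|].
  split; [apply Lmarked_isometry; assumption|].
  split; [apply Rmarked_in_Ralg; assumption|].
  split; [apply Rmarked_isometry; assumption|].
  split; [apply Rmarked_orthogonal_R0|].
  split; intros w.
  - rewrite (Lword_Rword_marker_eta N eta B) by assumption. reflexivity.
  - rewrite Lmarked_xi_Rmarked_xi. reflexivity.
Qed.
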